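(* Write the $n$-th $*$-cocharacter of $M_{1,2}(F)$ as $\chi_n^*(M_{1,2}(F))=\sum m_{\langle\lambda\rangle}\chi_{\langle\lambda\rangle}$, the sum over multipartitions $\langle\lambda\rangle=(\lambda(1),\lambda(2),\lambda(3),\lambda(4))\vdash n$ with $h(\lambda(1))\le2$, $h(\lambda(2))\le3$, $h(\lambda(3))\le2$, $h(\lambda(4))\le2$. If $\langle\lambda\rangle=(\lambda(1),\lambda(2),\emptyset,\emptyset)$, then $m_{\langle\lambda\rangle}\neq0$ if and only if $h(\lambda(1))\le1$.
   Context: $F$ is a field of characteristic zero. $M_{1,2}(F)$ is $M_3(F)$ with $\mathbb{Z}_2$-grading with even part spanned by $e_{11},e_{22},e_{23},e_{32},e_{33}$, odd part by $e_{12},e_{13},e_{21},e_{31}$, and orthosymplectic superinvolution $*$ sending the matrix with rows $(a,b,c),(d,e,f),(g,h,i)$ to the matrix with rows $(a,-g,d),(c,i,-f),(-b,-h,e)$. Its even symmetric, even skew, odd symmetric, odd skew parts are $\mathrm{span}\{e_{11},e_{22}+e_{33}\}$, $\mathrm{span}\{e_{22}-e_{33},e_{23},e_{32}\}$, $\mathrm{span}\{e_{12}-e_{31},e_{13}+e_{21}\}$, $\mathrm{span}\{e_{12}+e_{31},e_{13}-e_{21}\}$. In the free $*$-superalgebra on variables $y_i^+,y_i^-,z_i^+,z_i^-$ (even symmetric, even skew, odd symmetric, odd skew), a $*$-identity is a polynomial vanishing under all substitutions of the variables by elements of the corresponding parts; $Id_2^*$ denotes the set of them. $P_n^*$ is the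 span of the monomials $w_{\sigma(1)}\cdots w_{\sigma(n)}$, $\sigma\in S_n$, $w_i\in\{y_i^+,y_i^-,z_i^+,z_i^-\}$. The group $\mathbb{H}_n=(\mathbb{Z}_2\times\mathbb{Z}_2)\wr S_n$, with $\mathbb{Z}_2\times\mathbb{Z}_2=\{1,*,\zeta,*\zeta\}$, acts on $P_n^*$: $h=(a_1,\dots,a_n;\sigma)$ sends $y_i^+\mapsto y_{\sigma(i)}^+$, $y_i^-\mapsto \pm y_{\sigma(i)}^-$ (sign $+$ iff $a_{\sigma(i)}\in\{1,\zeta\}$), $z_i^+\mapsto\pm z_{\sigma(i)}^+$ ($+$ iff $a_{\sigma(i)}\in\{1,*\}$), $z_i^-\mapsto\pm z_{\sigma(i)}^-$ ($+$ iff $a_{\sigma(i)}\in\{1,*\zeta\}$). The character of the $\mathbb{H}_n$-module $P_n^*/(P_n^*\cap Id_2^*(M_{1,2}(F)))$ is the $n$-th $*$-cocharacter $\chi_n^*(M_{1,2}(F))$. Irreducible $\mathbb{H}_n$-characters $\chi_{\langle\lambda\rangle}$ correspond to multipartitions $\langle\lambda\rangle=(\lambda(1),\dots,\lambda(4))$, $\lambda(i)\vdash n_i$, $n_1+\dots+n_4=n$, where $\lambda(1),\lambda(2),\lambda(3),\lambda(4)$ correspond respectively to the variables of type $y^+,y^-,z^+,z^-$; equivalently $m_{\langle\lambda\rangle}$ is the multiplicity of $\chi_{\lambda(1)}\otimes\cdots\otimes\chi_{\lambda(4)}$ in the $S_{n_1}\times\cdots\times S_{n_4}$-character of the multilinear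 polynomials with $n_1,\dots,n_4$ variables of the four types modulo identities. $h(\mu)$ is the number of parts (height) of a partition $\mu$, and $\emptyset$ the empty partition; only multipartitions with the stated height bounds can occur with nonzero multiplicity. *)

From HB Require Import structures.
From mathcomp Require Import all_boot all_order all_algebra all_fingroup.
From mathcomp Require Import boolp.

Set Implicit Arguments.
Unset Strict Implicit.
Unset Printing Implicit Defensive.
Import GRing.Theory.
Local Open Scope ring_scope.

(* The height h(mu) of a partition mu is [size mu].                    *)
Definition is_partition (k : nat) (l : seq nat) : bool :=
  [&& sorted geq l, all (fun x => 0 < x)%N l & sumn l == k].

(* Row and column (0-based) of the cell containing the entry x of the
   canonical Young tableau of shape l, filled row by row with 0,1,2,...  *)
Fixpoint row_of (l : seq nat) (x : nat) : nat :=
  if l is a :: l' then (if (x < a)%N then 0%N else (row_of l' (x - a)).+1)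
  else 0%N.
Fixpoint col_of (l : seq nat) (x : nat) : nat :=
  if l is a :: l' then (if (x < a)%N then x else col_of l' (x - a))
  else x.

Section M12.
Variable F : fieldType.

Definition o0 : 'I_3 := @Ordinal 3 0 isT.
Definition o1 : 'I_3 := @Ordinal 3 1 isT.
Definition o2 : 'I_3 := @Ordinal 3 2 isT.

(* The orthosymplectic superinvolution on M_{1,2}(F):
   rows (a,b,c),(d,e,f),(g,h,i)  |->  rows (a,-g,d),(c,i,-f),(-b,-h,e). *)
Definition star_entry (A : 'M[F]_3) (i j : nat) : F :=
  match i, j with
  | 0, 0 => A o0 o0 | 0, 1 => - A o2 o0 | 0, _ => A o1 o0
  | 1, 0 => A o0 o2 | 1, 1 => A o2 o2   | 1, _ => - A o1 o2
  | _, 0 => - A o0 o1 | _, 1 => - A o2 o1 | _, _ => A o1 o1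
  end.
Definition star3 (A : 'M[F]_3) : 'M[F]_3 :=
  \matrix_(i < 3, j < 3) star_entry A i j.

(* Even part of the Z_2-grading: spanned by e11, e22, e23, e32, e33. *)
Definition even3 (A : 'M[F]_3) : Prop :=
  [/\ A o0 o1 = 0, A o0 o2 = 0, A o1 o0 = 0 & A o2 o0 = 0].
Definition sym_even (A : 'M[F]_3) : Prop := even3 A /\ star3 A = A.
Definition skew_even (A : 'M[F]_3) : Prop := even3 A /\ star3 A = - A.

(* Multilinear *-polynomials in n1 variables y^+_0..y^+_(n1-1) (even
   symmetric) and n2 variables y^-_(n1)..y^-_(n1+n2-1) (even skew):
   the variable with index i < n1 + n2 is of type y^+ iff i < n1.
   A polynomial is given by its coefficients: f sigma is the coefficient
   of the monomial w_(sigma 0) w_(sigma 1) ... w_(sigma (n-1)). *)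
Definition mpol (n : nat) := {ffun 'S_n -> F}.

Definition eval_mpol n (f : mpol n) (s : 'I_n -> 'M[F]_3) : 'M[F]_3 :=
  \sum_(sigma : 'S_n) f sigma *: \prod_(k < n) s (sigma k).

Definition admissible (n1 n2 : nat) (s : 'I_(n1 + n2) -> 'M[F]_3) : Prop :=
  forall i : 'I_(n1 + n2),
    ((i < n1)%N -> sym_even (s i)) /\ ((n1 <= i)%N -> skew_even (s i)).

Definition is_star_identity n1 n2 (f : mpol (n1 + n2)) : Prop :=
  forall s, admissible s -> eval_mpol f s = 0.

(* Cell labels of the tableau pair (T_{l1}, T_{l2}): variables of type y^+
   are placed in T_{l1}, variables of type y^- (shifted by n1) in T_{l2}. *)
Definition trow n1 n2 (l1 l2 : seq nat) (i : 'I_(n1 + n2)) : nat * nat :=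
  if (i < n1)%N then (0%N, row_of l1 i) else (1%N, row_of l2 (i - n1)).
Definition tcol n1 n2 (l1 l2 : seq nat) (i : 'I_(n1 + n2)) : nat * nat :=
  if (i < n1)%N then (0%N, col_of l1 i) else (1%N, col_of l2 (i - n1)).

Definition rowstab n1 n2 l1 l2 : pred 'S_(n1 + n2) :=
  [pred p : 'S_(n1 + n2) | [forall i : 'I_(n1 + n2),
     @trow n1 n2 l1 l2 (p i) == @trow n1 n2 l1 l2 i]].
Definition colstab n1 n2 l1 l2 : pred 'S_(n1 + n2) :=
  [pred p : 'S_(n1 + n2) | [forall i : 'I_(n1 + n2),
     @tcol n1 n2 l1 l2 (p i) == @tcol n1 n2 l1 l2 i]].

(* The action of a permutation g (relabelling of variables y_i |-> y_(g i))
   on polynomials: the monomial sigma goes to the monomial (sigma * g)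
   (recall (sigma * g) x = g (sigma x) in MathComp). *)
Definition act_mpol n (g : 'S_n) (f : mpol n) : mpol n :=
  [ffun tau => f (tau * g^-1)%g].

Definition young n1 n2 (l1 l2 : seq nat) (f : mpol (n1 + n2)) : mpol (n1 + n2) :=
  [ffun tau => \sum_(r in @rowstab n1 n2 l1 l2) \sum_(c in @colstab n1 n2 l1 l2)
      (-1) ^+ odd_perm c * act_mpol r (act_mpol c f) tau].

Definition indep_mod_id n1 n2 l1 l2 d (gs : 'I_d -> mpol (n1 + n2)) : Prop :=
  forall c : 'I_d -> F,
    is_star_identity [ffun tau => \sum_(i < d) c i * young l1 l2 (gs i) tau] ->
    forall i, c i = 0.

(* The multiplicity m_<l> of chi_(l1,l2,0,0) in the n-th *-cocharacter,
   n = n1 + n2: the multiplicity of chi_{l1} (x) chi_{l2} in the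
   S_{n1} x S_{n2}-module M = P_{n1,n2,0,0} / (P_{n1,n2,0,0} cap Id^*_2),
   computed as dim_F (e_{T_{l1}} e_{T_{l2}} M), i.e. the maximal number of
   elements of e P that are linearly independent modulo the identities
   (dim P = n!, which bounds this number). *)
Definition cochar_mult (n1 n2 : nat) (l1 l2 : seq nat) : nat :=
  \max_(d < (n1 + n2)`!.+1 |
         `[< exists gs : 'I_d -> mpol (n1 + n2), indep_mod_id l1 l2 gs >])
    (d : nat).

End M12.

(* If lambda(1) has two rows, the column stabilizer of T_lambda(1) contains the
   transposition of the two entries of its first column.  Both are y^+ variables, whose
   values diag(a, b, b) are central in the even part of M_{1,2}(F); reindexing the column
   antisymmetrizer by this transposition shows that every evaluation of e_{T_lambda} f
   equals its own opposite, so e_{T_lambda} f is a *-identity and the multiplicity is 0.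
   If lambda(1) has at most one row, substitute 1 for every y^+, and for a y^- in row i of
   T_lambda(2) the i-th of three pairwise anticommuting Pauli matrices of the lower 2x2
   block (this is where h(lambda(2)) <= 3 is used).  In the monomial listing the y^- column
   by column, each column of T_lambda(2) is a block of consecutive pairwise anticommuting
   factors, so a column permutation c multiplies its value by sgn(c), while row
   permutations do not change the substitution.  Thus e_{T_lambda} applied to this monomial
   evaluates to |R| |C| times a product of matrices with invertible lower block, which is
   nonzero in characteristic zero. *)

From HB Require Import structures.
From mathcomp Require Import all_boot all_order all_algebra all_fingroup.
From mathcomp Require Import boolp zify ring.

Set Implicit Arguments.
Unset Strict Implicit.
Unset Printing Implicit Defensive.
Import GRing.Theory.
Local Open Scope ring_scope.

Section SignCommutingProducts.
Variables (R : pzRingType) (e : nat).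
Local Notation eps := ((-1) ^+ e : R).

Lemma mul_prod_nat_signcomm (x : R) (u : nat -> R) m n :
  (forall k, (m <= k < n)%N -> x * u k = eps * (u k * x)) ->
  x * \prod_(m <= k < n) u k = (-1) ^+ (e * (n - m)) * (\prod_(m <= k < n) u k * x).
Proof.
elim: n => [|n IHn] xu.
  by rewrite big_geq // sub0n muln0 expr0 mulr1 !mul1r.
have [lemn|ltnm] := leqP m n; last first.
  by rewrite big_geq // (eqP ltnm) muln0 expr0 mulr1 !mul1r.
rewrite big_nat_recr //= mulrA IHn; last first.
  by move=> k /andP[mk kn]; apply: xu; rewrite mk ltnS ltnW.
rewrite -!mulrA xu ?lemn ?ltnSn // (subSn lemn) mulnSr exprD -mulrA; congr (_ * _).
by rewrite mulrA (commr_sign _ e) -mulrA.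
Qed.

Lemma prod_nat_swap_signcomm (u : nat -> R) p q n : (p < q < n)%N ->
  (forall k, (p < k < q)%N ->
     u p * u k = eps * (u k * u p) /\ u q * u k = eps * (u k * u q)) ->
  u q * u p = eps * (u p * u q) ->
  \prod_(0 <= k < n) u (if k == p then q else if k == q then p else k)
    = eps * \prod_(0 <= k < n) u k.
Proof.
move=> /andP[pq qn] mid upq.
pose v k := u (if k == p then q else if k == q then p else k).
have split_at (w : nat -> R) : \prod_(0 <= k < n) w k =
    \prod_(0 <= k < p) w k * (w p * (\prod_(p.+1 <= k < q) w k *
      (w q * \prod_(q.+1 <= k < n) w k))).
  have pn := ltn_trans pq qn.
  rewrite (big_cat_nat (leq0n p) (ltnW pn)) (big_ltn pn).
  by rewrite (big_cat_nat pq (ltnW qn)) (big_ltn qn).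
have out_pq m' n' : (n' <= p \/ p < m' /\ n' <= q \/ q < m')%N ->
    \prod_(m' <= k < n') v k = \prod_(m' <= k < n') u k.
  move=> range; apply: eq_big_nat => k mkn.
  by rewrite /v ifF ?ifF //; apply/eqP; lia.
have vp : v p = u q by rewrite /v eqxx.
have vq : v q = u p by rewrite /v eqxx gtn_eqF.
rewrite -/(\prod_(0 <= k < n) v k) !split_at vp vq !out_pq; try lia.
set M := \prod_(p.+1 <= k < q) u k; set s := (-1) ^+ (e * (q - p.+1)) : R.
have upM : u p * M = s * (M * u p) by apply: mul_prod_nat_signcomm => k /mid[].
have uqM : u q * M = s * (M * u q) by apply: mul_prod_nat_signcomm => k /mid[].
have core : u q * (M * u p) = eps * (u p * (M * u q)).
  rewrite -[M * u p](signrMK (e * (q - p.+1))) -upM -[M * u q](signrMK (e * (q - p.+1))) -uqM.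
  rewrite !mulrA -/s (commr_sign (u q)) (commr_sign (eps * u p)) -!mulrA; congr (_ * _).
  by rewrite !mulrA upq !mulrA.
by rewrite (mulrA M) (mulrA (u q)) core !mulrA (commr_sign _ e).
Qed.

Lemma prod_tperm_signcomm n (u : 'I_n -> R) (p q : 'I_n) : p != q ->
  (forall k : 'I_n, (minn p q < k < maxn p q)%N ->
     u p * u k = eps * (u k * u p) /\ u q * u k = eps * (u k * u q)) ->
  u q * u p = eps * (u p * u q) ->
  \prod_(k < n) u (tperm p q k) = eps * \prod_(k < n) u k.
Proof.
move=> pNq mid upq; wlog pq : p q pNq mid upq / (p < q)%N => [wlog_pq|].
  case: (ltngtP p q) => [pq|qp|/val_inj pEq]; [exact: wlog_pq | | by rewrite pEq eqxx in pNq].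
  rewrite tpermC wlog_pq // 1?eq_sym // => [k|]; last by rewrite upq signrMK.
  by rewrite minnC maxnC => /mid[].
case: n => [|n] in u p q pNq pq mid upq *; first by have := ltn_ord p.
pose U k := u (inord k).
pose swap k := if k == val p then val q else if k == val q then val p else k.
have valE (k : 'I_n.+1) : val (tperm p q k) = swap k.
  case: tpermP => [->|->|/eqP kp /eqP kq]; rewrite /swap ?eqxx ?(gtn_eqF pq) //.
  by rewrite !val_eqE (negbTE kp) (negbTE kq).
have uU (k : 'I_n.+1) : u k = U k by rewrite /U inord_val.
under eq_bigr do rewrite uU valE.
under [in RHS]eq_bigr do rewrite uU.
rewrite -(big_mkord xpredT (fun k => U (swap k))) -(big_mkord xpredT U).
apply: prod_nat_swap_signcomm => [|k /andP[pk kq]|]; rewrite ?pq ?ltn_ord // -?uU //.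
have kn : (k < n.+1)%N := ltn_trans kq (ltn_ord q).
have -> : U k = u (Ordinal kn) by rewrite uU.
by apply: mid; rewrite /= (minn_idPl (ltnW pq)) (maxn_idPr (ltnW pq)) pk.
Qed.
End SignCommutingProducts.

Lemma ord3P (P : 'I_3 -> Prop) : P o0 -> P o1 -> P o2 -> forall i, P i.
Proof.
move=> P0 P1 P2 [[|[|[|//]]] lti3].
- by rewrite (_ : Ordinal lti3 = o0) //; apply: val_inj.
- by rewrite (_ : Ordinal lti3 = o1) //; apply: val_inj.
- by rewrite (_ : Ordinal lti3 = o2) //; apply: val_inj.
Qed.

Section EvenPart.
Variable F : fieldType.
Implicit Types A B : 'M[F]_3.

Lemma mul3E A B i j : (A * B) i j = A i o0 * B o0 j + A i o1 * B o1 j + A i o2 * B o2 j.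
Proof.
rewrite -mulmxE mxE !big_ord_recl big_ord0 addr0 addrA.
by congr (_ * _ + _ * _ + _ * _); congr (_ _ _); apply: val_inj.
Qed.

Lemma even3M A B : even3 A -> even3 B -> even3 (A * B).
Proof.
move=> [a01 a02 a10 a20] [b01 b02 b10 b20].
by split; rewrite mul3E ?a01 ?a02 ?a10 ?a20 ?b01 ?b02 ?b10 ?b20; ring.
Qed.

Lemma sym_even1 : sym_even (1 : 'M[F]_3).
Proof.
split; first by split; rewrite mxE.
by apply/matrixP; apply: ord3P; apply: ord3P; rewrite !mxE /= ?mxE /= ?oppr0.
Qed.

Lemma sym_even_entries (two_neq0 : 2%:R != 0 :> F) A : sym_even A ->
  [/\ even3 A, A o1 o2 = 0, A o2 o1 = 0 & A o2 o2 = A o1 o1].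
Proof.
move=> [evA /matrixP starA].
have oppr_fix0 (x : F) : - x = x -> x = 0.
  move=> Nxx; have /eqP : 2%:R * x = 0 by rewrite mulr_natl mulr2n -{1}Nxx addNr.
  by rewrite mulf_eq0 (negbTE two_neq0) => /eqP.
split=> //.
- by apply: oppr_fix0; have := starA o1 o2; rewrite mxE.
- by apply: oppr_fix0; have := starA o2 o1; rewrite mxE.
- by have := starA o2 o2; rewrite mxE.
Qed.

Lemma sym_even_comm (two_neq0 : 2%:R != 0 :> F) A B :
  sym_even A -> even3 B -> GRing.comm A B.
Proof.
move=> /(sym_even_entries two_neq0) [[a01 a02 a10 a20] a12 a21 a22] [b01 b02 b10 b20].
apply/matrixP; apply: ord3P; apply: ord3P;
  by rewrite !mul3E ?a01 ?a02 ?a10 ?a20 ?a12 ?a21 ?a22 ?b01 ?b02 ?b10 ?b20; ring.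
Qed.

Definition det22 A := A o1 o1 * A o2 o2 - A o1 o2 * A o2 o1.

Lemma det22M A B : even3 A -> even3 B -> det22 (A * B) = det22 A * det22 B.
Proof.
move=> [a01 a02 a10 a20] [b01 b02 b10 b20].
by rewrite /det22 !mul3E ?a01 ?a02 ?a10 ?a20 ?b01 ?b02 ?b10 ?b20; ring.
Qed.

Lemma det221 : det22 1 = 1.
Proof. by rewrite /det22 !mxE /=; ring. Qed.

Definition pauli (k : nat) : 'M[F]_3 :=
  match k with
  | 0 => delta_mx o1 o1 - delta_mx o2 o2
  | 1 => delta_mx o1 o2 + delta_mx o2 o1
  | _ => delta_mx o1 o2 - delta_mx o2 o1
  end.

Lemma pauli_skew_even k : skew_even (pauli k).
Proof.
split; first by case: k => [|[|k]]; split; rewrite !mxE /= ?subrr ?addr0.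
by apply/matrixP; apply: ord3P; apply: ord3P; rewrite !mxE;
  case: k => [|[|k]]; rewrite /= !mxE /=; ring.
Qed.

Lemma pauli_anticomm i j : (i < 3)%N -> (j < 3)%N -> i != j ->
  pauli i * pauli j = - (pauli j * pauli i).
Proof.
case: i => [|[|[|//]]]; case: j => [|[|[|//]]] //= _ _ _;
by apply/matrixP; apply: ord3P; apply: ord3P; rewrite [in RHS]mxE !mul3E !mxE /=; ring.
Qed.

Lemma det22_pauli k : det22 (pauli k) ^+ 2 = 1.
Proof. by case: k => [|[|k]]; rewrite /det22 !mxE /=; ring. Qed.

Lemma prod_even_det22_neq0 n (A : 'I_n -> 'M[F]_3) :
  (forall k, even3 (A k) /\ det22 (A k) ^+ 2 = 1) -> \prod_(k < n) A k != 0.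
Proof.
move=> evA; have [_ detP] : even3 (\prod_(k < n) A k) /\ det22 (\prod_(k < n) A k) ^+ 2 = 1.
  apply: (big_ind (fun M => even3 M /\ det22 M ^+ 2 = 1)) => //.
    by split; [case: sym_even1 | rewrite det221 expr1n].
  move=> M N [evM dM] [evN dN]; split; first exact: even3M.
  by rewrite det22M // exprMn dM dN mulr1.
apply/eqP => prod0; move: detP; rewrite prod0 /det22 !mxE mul0r subrr expr0n => /eqP.
by rewrite eq_sym oner_eq0.
Qed.
End EvenPart.

Lemma row_of_lt l x : (x < sumn l)%N -> (row_of l x < size l)%N.
Proof. by elim: l x => [|a l IHl] x //=; case: ifP => // xa xlt; rewrite ltnS IHl //; lia. Qed.

Lemma cell_inj l x y : (x < sumn l)%N -> (y < sumn l)%N ->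
  row_of l x = row_of l y -> col_of l x = col_of l y -> x = y.
Proof.
elim: l x y => [|a l IHl] x y //=.
case: ifP => xa; case: ifP => ya //= xlt ylt [] rxy cxy; have := IHl (x - a)%N (y - a)%N; lia.
Qed.

Lemma col_of_one_row l x : (size l <= 1)%N -> (x < sumn l)%N -> col_of l x = x.
Proof. by case: l => [|a [|//]] //= _; rewrite addn0 => ->. Qed.

Lemma tperm_conj (T : finType) (rho : {perm T}) a b k :
  tperm a b (rho k) = rho (tperm (rho^-1 a) (rho^-1 b) k)%g.
Proof. by rewrite -{1}[a](permKV rho) -{1}[b](permKV rho) -[in LHS]tpermJ permJ. Qed.

Section SortPerm.
Variables (n : nat) (key : 'I_n -> nat).
Hypothesis key_inj : injective key.

Definition key_rank (i : 'I_n) : nat := #|[pred j | key j < key i]%N|.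

Lemma key_rank_lt i : (key_rank i < n)%N.
Proof.
apply: (@leq_ltn_trans #|predC1 i|).
  by apply/subset_leq_card/subsetP => j; rewrite !inE; apply: contraTneq => ->; rewrite ltnn.
by rewrite cardC1 card_ord ltn_predL (leq_ltn_trans _ (ltn_ord i)).
Qed.

Lemma key_rank_mono i j : (key i < key j)%N -> (key_rank i < key_rank j)%N.
Proof.
move=> ltij; apply/proper_card/properP; split; last by exists i; rewrite !inE ?ltnn.
by apply/subsetP => k; rewrite !inE => /ltn_trans; apply.
Qed.

Lemma key_rank_inj : injective (fun i => Ordinal (key_rank_lt i)).
Proof.
move=> i j [] eq_rank; apply: key_inj.
by case: (ltngtP (key i) (key j)) => // /key_rank_mono; rewrite eq_rank ltnn.
Qed.

Definition sort_perm : 'S_n := (perm key_rank_inj)^-1.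

Lemma sort_perm_mono (i j : 'I_n) : (i < j)%N -> (key (sort_perm i) < key (sort_perm j))%N.
Proof.
have rankK k : key_rank (sort_perm k) = k.
  by rewrite -[RHS](congr1 val (permKV (perm key_rank_inj) k)) permE.
move=> ltij; case: (ltngtP (key (sort_perm i)) (key (sort_perm j))) => //.
  by move=> /key_rank_mono; rewrite !rankK ltnNge ltnW.
by move=> /key_inj/perm_inj ji; rewrite ji ltnn in ltij.
Qed.

Lemma sort_perm_between (i j k : 'I_n) : (minn i j < k < maxn i j)%N ->
  (minn (key (sort_perm i)) (key (sort_perm j)) < key (sort_perm k)
     < maxn (key (sort_perm i)) (key (sort_perm j)))%N.
Proof.
case: (ltngtP i j) => [ltij|ltji|->]; last lia.
- by move=> /andP[/sort_perm_mono ik /sort_perm_mono kj]; have := sort_perm_mono ltij; lia.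
- by move=> /andP[/sort_perm_mono jk /sort_perm_mono ki]; have := sort_perm_mono ltji; lia.
Qed.

End SortPerm.

Section Evaluation.
Variable F : fieldType.

Lemma eval_mpol_lincomb n d (c : 'I_d -> F) (g : 'I_d -> mpol F n) s :
  eval_mpol [ffun tau => \sum_(i < d) c i * g i tau] s = \sum_(i < d) c i *: eval_mpol (g i) s.
Proof.
rewrite /eval_mpol; under eq_bigr do rewrite ffunE scaler_suml.
rewrite exchange_big /=; apply: eq_bigr => i _.
by rewrite scaler_sumr; apply: eq_bigr => tau _; rewrite scalerA.
Qed.

Definition monomial n (sigma : 'S_n) : mpol F n := [ffun t => (t == sigma)%:R].

Lemma eval_monomial n (sigma : 'S_n) w :
  eval_mpol (monomial sigma) w = \prod_(k < n) w (sigma k).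
Proof.
rewrite /eval_mpol (bigD1 sigma) //= ffunE eqxx scale1r [X in _ + X]big1 ?addr0 // => t.
by rewrite ffunE => /negbTE->; rewrite scale0r.
Qed.

Lemma eval_young n1 n2 (l1 l2 : seq nat) (g : mpol F (n1 + n2)) s :
  eval_mpol (young l1 l2 g) s =
  \sum_(r in rowstab l1 l2) \sum_(c in colstab l1 l2)
     (-1) ^+ odd_perm c *: eval_mpol g (fun k => s (r (c k))).
Proof.
rewrite /eval_mpol; under eq_bigr do rewrite ffunE scaler_suml.
rewrite exchange_big /=; apply: eq_bigr => r _.
under eq_bigr do rewrite scaler_suml.
rewrite exchange_big /=; apply: eq_bigr => c _.
rewrite scaler_sumr (reindex_inj (mulIg (c * r)%g)) /=; apply: eq_bigr => tau _.
rewrite !ffunE scalerA !mulgA !mulgK; congr (_ *: _).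
by apply: eq_bigr => k _; rewrite !permM.
Qed.

Lemma eval_mpol_tperm_central n (g : mpol F n) (w : 'I_n -> 'M[F]_3) (a b : 'I_n) :
  (forall i, GRing.comm (w a) (w i)) -> (forall i, GRing.comm (w b) (w i)) ->
  eval_mpol g (fun k => w (tperm a b k)) = eval_mpol g w.
Proof.
move=> wa wb; have [->|aNb] := eqVneq a b.
  by congr eval_mpol; apply/funext => k; rewrite tperm1 perm1.
rewrite /eval_mpol; apply: eq_bigr => rho _; congr (_ *: _).
under eq_bigr do rewrite tperm_conj.
rewrite -[RHS]mul1r -(expr0 (-1)).
apply: prod_tperm_signcomm => [|k _|]; rewrite ?permKV ?expr0 ?mul1r //.
- by apply: contra aNb => /eqP/(congr1 rho); rewrite !permKV => ->.
- by split; [exact: wa | exact: wb].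
- exact: wb.
Qed.

End Evaluation.

Section Stabilizers.
Variables (n1 n2 : nat) (l1 l2 : seq nat).
Local Notation n := (n1 + n2)%N.
Local Notation R := (@rowstab n1 n2 l1 l2).
Local Notation C := (@colstab n1 n2 l1 l2).

Lemma rowstabP (r : 'S_n) :
  reflect (forall i, @trow n1 n2 l1 l2 (r i) = trow l1 l2 i) (r \in R).
Proof. by apply: (iffP forallP) => rR i; apply/eqP/rR. Qed.

Lemma colstabP (c : 'S_n) :
  reflect (forall i, @tcol n1 n2 l1 l2 (c i) = tcol l1 l2 i) (c \in C).
Proof. by apply: (iffP forallP) => cC i; apply/eqP/cC. Qed.

Lemma rowstab_ltn r i : r \in R -> (r i < n1)%N = (i < n1)%N.
Proof. by move=> /rowstabP/(_ i); rewrite /trow; case: ifP; case: ifP. Qed.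

Lemma colstab_ltn c i : c \in C -> (c i < n1)%N = (i < n1)%N.
Proof. by move=> /colstabP/(_ i); rewrite /tcol; case: ifP; case: ifP. Qed.

Lemma colstabM c c' : c \in C -> c' \in C -> (c * c')%g \in C.
Proof. by move=> /colstabP cC /colstabP cC'; apply/colstabP => i; rewrite permM cC' cC. Qed.

Lemma colstab1 : (1%g : 'S_n) \in C.
Proof. by apply/colstabP => i; rewrite perm1. Qed.

Lemma rowstab1 : (1%g : 'S_n) \in R.
Proof. by apply/rowstabP => i; rewrite perm1. Qed.

Lemma tperm_colstab a b : @tcol n1 n2 l1 l2 a = tcol l1 l2 b -> tperm a b \in C.
Proof. by move=> ab; apply/colstabP => i; case: tpermP => [->|->|]. Qed.

End Stabilizers.

Section Admissible.
Variables (F : fieldType) (n1 n2 : nat).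
Local Notation n := (n1 + n2)%N.

Lemma admissible_even (s : 'I_n -> 'M[F]_3) i : admissible s -> even3 (s i).
Proof. by move=> /(_ i) [sym skew]; case: (ltnP i n1) => [/sym|/skew] []. Qed.

Lemma admissible_comp (pi : 'I_n -> 'I_n) (s : 'I_n -> 'M[F]_3) :
  (forall i, (pi i < n1)%N = (i < n1)%N) -> admissible s -> admissible (fun k => s (pi k)).
Proof.
by move=> pi_ltn adm i; have := adm (pi i); rewrite (leqNgt n1 (pi i)) pi_ltn -leqNgt.
Qed.

End Admissible.

Section Multiplicity.
Variables (F : fieldType) (n1 n2 : nat) (l1 l2 : seq nat).

Lemma cochar_mult_eq0 :
  (forall g : mpol F (n1 + n2), is_star_identity (young l1 l2 g)) ->
  cochar_mult F n1 n2 l1 l2 = 0%N.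
Proof.
move=> young_id; apply/eqP; rewrite -leqn0.
apply/bigmax_leqP => -[[|d] ltd] /asboolP [gs gs_indep] //.
suff : (1 : F) = 0 by move/eqP; rewrite oner_eq0.
apply: (gs_indep (fun=> 1) _ ord0) => s adm; rewrite eval_mpol_lincomb; apply: big1 => i _.
by rewrite young_id // scaler0.
Qed.

Lemma cochar_mult_gt0 (g : mpol F (n1 + n2)) :
  ~ is_star_identity (young l1 l2 g) -> (0 < cochar_mult F n1 n2 l1 l2)%N.
Proof.
move=> young_Nid; have one_lt : (1 < (n1 + n2)`!.+1)%N by rewrite ltnS fact_gt0.
apply: leq_trans (leq_bigmax_cond (Ordinal one_lt) _) => //; apply/asboolP.
exists (fun=> g) => c c_id i; rewrite (ord1 i).
apply/eqP/negPn/negP => c0_neq0; apply: young_Nid.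
move=> s adm; have := c_id s adm; rewrite eval_mpol_lincomb big_ord1 => /eqP.
by rewrite scaler_eq0 (negbTE c0_neq0) => /eqP.
Qed.

End Multiplicity.

Section SymmetricColumn.
Variables (F : fieldType) (n1 n2 : nat) (l1 l2 : seq nat).
Hypothesis two_neq0 : 2%:R != 0 :> F.
Local Notation n := (n1 + n2)%N.
Local Notation C := (@colstab n1 n2 l1 l2).

Lemma young_star_identity_sym_column (a b : 'I_n) (g : mpol F n) :
  a != b -> (a < n1)%N -> (b < n1)%N -> tperm a b \in C ->
  is_star_identity (young l1 l2 g).
Proof.
move=> aNb a_sym b_sym abC s adm; rewrite eval_young; apply: big1 => r rR.
set S := (X in X = 0).
have admRC c : c \in C -> admissible (fun k => s (r (c k))).
  move=> cC; apply: admissible_comp adm => i.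
  by rewrite (rowstab_ltn _ rR) (colstab_ltn _ cC).
have S_opp : S = - S.
  rewrite {1}/S (reindex_inj (mulgI (tperm a b))) /= -sumrN.
  have tC c : ((tperm a b * c)%g \in C) = (c \in C).
    apply/idP/idP => [tcC | cC]; last exact: colstabM.
    by rewrite -(mul1g c) -(tperm2 a b) -mulgA colstabM.
  rewrite (eq_bigl _ _ tC); apply: eq_bigr => c cC.
  rewrite odd_mul_tperm aNb signr_addb expr1 mulN1r scaleNr; congr (- (_ *: _)).
  have central (x : 'I_n) : (x < n1)%N -> forall i, GRing.comm (s (r (c x))) (s (r (c i))).
    move=> x_sym i; apply: (sym_even_comm two_neq0); last exact: admissible_even (admRC c cC).
    by case: (admRC c cC x) => /(_ x_sym).
  rewrite -[RHS](eval_mpol_tperm_central g (central a a_sym) (central b b_sym)).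
  by congr eval_mpol; apply/funext => k; rewrite permM.
have /eqP : S *+ 2 = 0 by rewrite mulr2n {1}S_opp addNr.
by rewrite -scaler_nat scaler_eq0 (negbTE two_neq0) => /eqP.
Qed.

End SymmetricColumn.

Lemma young_two_rows_star_identity (F : fieldType) (n2 a0 a1 : nat) (l2 : seq nat)
    (g : mpol F (a0 + a1 + n2)%N) :
  2%:R != 0 :> F -> (0 < a0)%N -> (0 < a1)%N -> is_star_identity (young [:: a0; a1] l2 g).
Proof.
move=> two_neq0 a0_gt0 a1_gt0.
have lt0 : (0 < a0 + a1 + n2)%N by lia.
have lta0 : (a0 < a0 + a1 + n2)%N by lia.
have ltn_a0 : (a0 < a0 + a1)%N by lia.
apply: (young_star_identity_sym_column two_neq0 (a := Ordinal lt0) (b := Ordinal lta0)) => //=.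
- by rewrite -val_eqE /= eq_sym -lt0n.
- by rewrite addn_gt0 a0_gt0.
- by apply: tperm_colstab; rewrite /tcol /= addn_gt0 a0_gt0 ltn_a0 ltnn subnn a1_gt0.
Qed.

Section OneRow.
Variables (F : fieldType) (n1 n2 : nat) (l1 l2 : seq nat).
Hypotheses (l1_sum : sumn l1 = n1) (l1_row : (size l1 <= 1)%N).
Hypotheses (l2_sum : sumn l2 = n2) (l2_rows : (size l2 <= 3)%N).
Local Notation n := (n1 + n2)%N.
Local Notation R := (@rowstab n1 n2 l1 l2).
Local Notation C := (@colstab n1 n2 l1 l2).
Implicit Types (a b i j k p q x y z : 'I_n) (r c : 'S_n).

Definition skew_row (i : 'I_n) := row_of l2 (i - n1).
Definition skew_col (i : 'I_n) := col_of l2 (i - n1).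

Lemma skew_row_lt i : (n1 <= i)%N -> (skew_row i < 3)%N.
Proof.
by move=> n1_le_i; apply: leq_trans l2_rows; apply: row_of_lt; have := ltn_ord i; lia.
Qed.

Lemma skew_cell_inj i j : (n1 <= i)%N -> (n1 <= j)%N ->
  skew_row i = skew_row j -> skew_col i = skew_col j -> i = j.
Proof.
move=> n1_le_i n1_le_j eq_row eq_col; apply: ord_inj.
have := ltn_ord i; have := ltn_ord j => ltj lti.
have := @cell_inj l2 (i - n1) (j - n1); rewrite l2_sum => /(_ _ _ eq_row eq_col); lia.
Qed.

Definition column_key (i : 'I_n) : nat :=
  if (i < n1)%N then nat_of_ord i else (n1 + 3 * skew_col i + skew_row i)%N.

Lemma column_key_inj : injective column_key.
Proof.
move=> i j; rewrite /column_key.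
case: (ltnP i n1) => ltin1; case: (ltnP j n1) => ltjn1; first (by move/ord_inj); try lia.
have := skew_row_lt ltin1; have := skew_row_lt ltjn1 => rj ri eq_key.
by apply: skew_cell_inj => //; lia.
Qed.

Lemma column_key_between x y z : (n1 <= x)%N -> (n1 <= y)%N -> skew_col x = skew_col y ->
  (minn (column_key x) (column_key y) < column_key z < maxn (column_key x) (column_key y))%N ->
  (n1 <= z)%N /\ skew_col z = skew_col x.
Proof.
move=> n1_le_x n1_le_y eq_col; rewrite /column_key (ltnNge x) (ltnNge y) n1_le_x n1_le_y /=.
have := skew_row_lt n1_le_x; have := skew_row_lt n1_le_y.
case: (leqP n1 z) => [n1_le_z | ltzn1] /=; last lia.
by have := skew_row_lt n1_le_z; split=> //; lia.
Qed.

Local Notation sigma := (sort_perm column_key_inj).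

Definition pauli_subst (i : 'I_n) : 'M[F]_3 := if (i < n1)%N then 1 else pauli F (skew_row i).

Lemma pauli_subst_admissible : admissible pauli_subst.
Proof.
move=> i; rewrite /pauli_subst; split=> [-> | ]; first exact: sym_even1.
by rewrite leqNgt => /negbTE ->; apply: pauli_skew_even.
Qed.

Lemma rowstab_pauli_subst r i : r \in R -> pauli_subst (r i) = pauli_subst i.
Proof.
move=> rR; rewrite /pauli_subst (rowstab_ltn _ rR); case: ifP => // n1_le_i.
by have /rowstabP/(_ i) := rR; rewrite /trow (rowstab_ltn _ rR) n1_le_i /skew_row => -[] ->.
Qed.

Lemma colstab_fix c i : c \in C -> (i < n1)%N -> c i = i.
Proof.
move=> cC ltin1; have /colstabP/(_ i) := cC; rewrite /tcol (colstab_ltn _ cC) ltin1 => -[].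
by rewrite !col_of_one_row ?l1_sum ?(colstab_ltn _ cC) //; apply: val_inj.
Qed.

Lemma colstab_leq c i : c \in C -> (n1 <= c i)%N = (n1 <= i)%N.
Proof. by move=> cC; rewrite leqNgt (colstab_ltn _ cC) -leqNgt. Qed.

Lemma colstab_skew_col c i : c \in C -> (n1 <= i)%N -> skew_col (c i) = skew_col i.
Proof.
move=> cC n1_le_i; have n1_le_ci : (n1 <= c i)%N by rewrite colstab_leq.
by have /colstabP/(_ i) := cC; rewrite /tcol !ifN -?leqNgt // => -[].
Qed.

Lemma colstab_column_block c (p q k : 'I_n) : c \in C ->
  (n1 <= c (sigma p))%N -> (n1 <= c (sigma q))%N ->
  skew_col (c (sigma p)) = skew_col (c (sigma q)) -> (minn p q < k < maxn p q)%N ->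
  (n1 <= c (sigma k))%N /\ skew_col (c (sigma k)) = skew_col (c (sigma p)).
Proof.
move=> cC; rewrite !(colstab_leq _ cC) => n1_le_p n1_le_q.
rewrite (colstab_skew_col cC n1_le_p) (colstab_skew_col cC n1_le_q) => eq_col.
move=> /(sort_perm_between column_key_inj).
move=> /(column_key_between n1_le_p n1_le_q eq_col) [n1_le_k col_k].
by rewrite (colstab_skew_col cC).
Qed.

Definition pauli_word c : 'M[F]_3 := \prod_(k < n) pauli_subst (c (sigma k)).

Lemma pauli_word_tperm c a b : c \in C -> a != b -> (n1 <= a)%N -> (n1 <= b)%N ->
  skew_col a = skew_col b -> pauli_word (c * tperm a b)%g = - pauli_word c.
Proof.
move=> cC aNb n1_le_a n1_le_b eq_col; pose tau := (sigma * c)%g.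
have tauE k : c (sigma k) = tau k by rewrite permM.
have subst_skew i : (n1 <= i)%N -> pauli_subst i = pauli F (skew_row i).
  by rewrite /pauli_subst leqNgt => /negbTE->.
have rowN i j : (n1 <= i)%N -> (n1 <= j)%N -> skew_col i = skew_col j -> i != j ->
    pauli_subst i * pauli_subst j = (-1) ^+ 1 * (pauli_subst j * pauli_subst i).
  move=> n1_le_i n1_le_j eq_ij iNj; rewrite !subst_skew // expr1 mulN1r.
  apply: pauli_anticomm; rewrite ?skew_row_lt //.
  by apply: contra iNj => /eqP eq_row; apply/eqP/skew_cell_inj.
rewrite /pauli_word; under eq_bigr do rewrite permM tauE tperm_conj.
under [in RHS]eq_bigr do rewrite tauE.
rewrite -mulN1r -[-1 in RHS](expr1 (-1)).
apply: prod_tperm_signcomm => [|k between|]; rewrite ?permKV.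
- by apply: contra aNb => /eqP/(congr1 tau); rewrite !permKV => ->.
- have := colstab_column_block cC _ _ _ between; rewrite !tauE !permKV.
  case=> // n1_le_k col_k; have tauk_neq x : k != (tau^-1)%g x -> tau k != x.
    by apply: contra => /eqP <-; rewrite permK.
  have [kNp kNq] : k != (tau^-1)%g a /\ k != (tau^-1)%g b.
    by split; apply/eqP => k_eq; move: between; rewrite k_eq; lia.
  by split; apply: rowN; rewrite ?col_k // eq_sym tauk_neq.
- by apply: rowN; rewrite 1?eq_sym.
Qed.

Lemma moved_tperm_lt c x : c x != x ->
  (#|[pred i | (c * tperm x (c x))%g i != i]| < #|[pred i | c i != i]|)%N.
Proof.
move=> cxNx; apply/proper_card/properP; split; last first.
  by exists x; rewrite !inE ?permM ?tpermR ?eqxx.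
apply/subsetP => i; rewrite !inE permM; apply: contra => /eqP ci; rewrite ci tpermD //.
  by apply: contra cxNx => /eqP ->; rewrite ci.
by apply: contra cxNx => /eqP cx_eq; apply/eqP/(@perm_inj _ c); rewrite cx_eq ci.
Qed.

Lemma pauli_word_colstab c : c \in C -> pauli_word c = (-1) ^+ odd_perm c *: pauli_word 1.
Proof.
have [m] := ubnP #|[pred i | c i != i]|; elim: m c => // m IHm c lt_moved cC.
case: (pickP [pred i | c i != i]) => [x /= cxNx | fixed]; last first.
  have -> : c = 1%g by apply/permP => i; rewrite perm1; apply/eqP/negbFE/fixed.
  by rewrite odd_perm1 expr0 scale1r.
have n1_le_x : (n1 <= x)%N by rewrite leqNgt; apply: contra cxNx => /(colstab_fix cC) ->.
have c'C : (c * tperm x (c x))%g \in C.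
  by rewrite colstabM // tperm_colstab //; have /colstabP := cC.
have c_eq : c = (c * tperm x (c x) * tperm x (c x))%g by rewrite -mulgA tperm2 mulg1.
rewrite [in LHS]c_eq pauli_word_tperm ?(colstab_leq _ cC) 1?eq_sym //; last first.
  by rewrite (colstab_skew_col cC).
rewrite IHm //; last by apply: leq_trans (moved_tperm_lt cxNx) _; rewrite -ltnS.
by rewrite odd_permM odd_tperm eq_sym cxNx signr_addb expr1 mulrN1 scaleNr opprK.
Qed.

Lemma pauli_word1_neq0 : pauli_word 1 != 0.
Proof.
apply: prod_even_det22_neq0 => k; rewrite perm1 /pauli_subst; case: ifP => _.
  by split; [case: (sym_even1 F) | rewrite det221 expr1n].
by split; [exact: (pauli_skew_even _ _).1 | exact: det22_pauli].
Qed.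

Lemma eval_young_monomial :
  eval_mpol (young l1 l2 (monomial F sigma)) pauli_subst = pauli_word 1 *+ #|C| *+ #|R|.
Proof.
rewrite eval_young -sumr_const; apply: eq_bigr => r rR.
rewrite -sumr_const; apply: eq_bigr => c cC.
rewrite eval_monomial (eq_bigr _ (fun k _ => rowstab_pauli_subst _ rR)).
by rewrite -/(pauli_word c) pauli_word_colstab // scalerA -signr_addb addbb scale1r.
Qed.

Lemma young_not_star_identity : [pchar F] =i pred0 ->
  exists g : mpol F n, ~ is_star_identity (young l1 l2 g).
Proof.
move=> /pcharf0P charF0; exists (monomial F sigma) => young_id.
have := young_id _ pauli_subst_admissible.
rewrite eval_young_monomial -mulrnA -scaler_nat => /eqP; rewrite scaler_eq0 charF0 muln_eq0.
have [C_gt0 R_gt0] : (0 < #|C|)%N /\ (0 < #|R|)%N.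
  by split; apply/card_gt0P; exists 1%g; [exact: colstab1 | exact: rowstab1].
by rewrite (negbTE pauli_word1_neq0) orbF !eqn0Ngt C_gt0 R_gt0.
Qed.

End OneRow.

Unset Implicit Arguments.

Theorem proposition5p2 (F : fieldType) (charF0 : [pchar F] =i pred0)
  (n1 n2 : nat) (l1 l2 : seq nat) :
  is_partition n1 l1 -> is_partition n2 l2 ->
  (size l1 <= 2)%N -> (size l2 <= 3)%N ->
  (cochar_mult F n1 n2 l1 l2 != 0)%N <-> (size l1 <= 1)%N.
Proof.
move=> /and3P[_ l1_pos /eqP l1_sum] /and3P[_ _ /eqP l2_sum] l1_rows l2_rows.
split=> [|l1_row]; last first.
  have [g young_Nid] := young_not_star_identity l1_sum l1_row l2_sum l2_rows charF0.
  by rewrite -lt0n; apply: cochar_mult_gt0 young_Nid.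
apply: contraLR; rewrite -ltnNge negbK.
case: l1 l1_rows l1_pos l1_sum => [|a0 [|a1 [|//]]] //= _ /and3P[a0_gt0 a1_gt0 _].
rewrite addn0 => <- _; apply/eqP/cochar_mult_eq0 => g.
by apply: young_two_rows_star_identity; rewrite // (pcharf0P _).1.
Qed.
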